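(* If $A\subset\mathbb{R}^d$ is a finite set in general position, then for all $K\in\mathbb{N}$, every simplicial complex in the bifiltration $\textnormal{S-Del}^{\le K}$ has dimension at most $2\binom{d+1}{\lfloor\frac{d+1}{2}\rfloor}$.
   Context: For $\tilde A\subseteq A$ let $\mathrm{Ball}_r(\tilde A)=\{b: \|b-\tilde a\|\le r\ \forall\tilde a\in\tilde A\}$ and for $|\tilde A|=k$ let $\mathrm{Vor}(\tilde A)=\{b\in\mathbb{R}^d: \|b-\tilde a\|\le\|b-a\|\ \forall\tilde a\in\tilde A, a\in A\setminus\tilde A\}$. Let $\mathrm{Del}^{+}_{r,k}$ be the abstract simplicial complex whose vertices are subsets $\tilde A\subseteq A$ with $|\tilde A|\in\{k,k+1\}$ and whose simplices are the sets $\sigma$ of such subsets with $\bigcap_{\tilde A\in\sigma}(\mathrm{Ball}_r(\tilde A)\cap\mathrm{Vor}(\tilde A))\neq\emptyset$. For $r\ge0$ and $k\in\mathbb{N}=\{1,2,\dots\}$, $\textnormal{S-Del}^{\le K}_{r,k}=\bigcup_{i=k}^{K-1}\mathrm{Del}^{+}_{r,i}$. *)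

From HB Require Import structures.
From mathcomp Require Import all_boot all_order all_algebra.
From mathcomp Require Import finmap.
From mathcomp Require Import reals.
Set Implicit Arguments. Unset Strict Implicit. Unset Printing Implicit Defensive.
Import Order.TTheory GRing.Theory Num.Theory.
Local Open Scope ring_scope.
Local Open Scope fset_scope.

Section Defs.
Variables (R : realType) (d : nat).
Local Notation pt := 'rV[R]_d.

Definition enorm (v : pt) : R := Num.sqrt (\sum_(j < d) (v ord0 j) ^+ 2).

Definition affinely_independent (S : {fset pt}) : Prop :=
  forall lam : pt -> R,
    \sum_(p <- S) lam p = 0 ->
    \sum_(p <- S) lam p *: p = 0 ->
    forall p, p \in S -> lam p = 0.

Definition cospherical (S : {fset pt}) : Prop :=
  exists (c : pt) (rho : R), forall p, p \in S -> enorm (p - c) = rho.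

(* General position: no j+2 points on a common j-flat for j < d (i.e. every
   subset of at most d+1 points is affinely independent), and no d+2 points
   on a common sphere. *)
Definition general_position (A : {fset pt}) : Prop :=
  (forall S, S `<=` A -> (#|` S| <= d.+1)%N -> affinely_independent S) /\
  (forall S, S `<=` A -> #|` S| = d.+2 -> ~ cospherical S).

Definition inBall (r : R) (At : {fset pt}) (b : pt) : Prop :=
  forall a, a \in At -> enorm (b - a) <= r.

Definition inVor (A At : {fset pt}) (b : pt) : Prop :=
  forall at_ a, at_ \in At -> a \in A `\` At -> enorm (b - at_) <= enorm (b - a).

Definition DelPlus_vertex (A : {fset pt}) (k : nat) (At : {fset pt}) : Prop :=
  At `<=` A /\ (#|` At| = k \/ #|` At| = k.+1).

Definition DelPlus (A : {fset pt}) (r : R) (k : nat) (sigma : {fset {fset pt}}) : Prop :=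
  (forall At, At \in sigma -> DelPlus_vertex A k At) /\
  exists b : pt, forall At, At \in sigma -> inBall r At b /\ inVor A At b.

Definition SDel (A : {fset pt}) (K : nat) (r : R) (k : nat) (sigma : {fset {fset pt}}) : Prop :=
  exists i : nat, (k <= i)%N /\ (i <= K.-1)%N /\ DelPlus A r i sigma.

End Defs.

From HB Require Import structures.
From mathcomp Require Import all_boot all_order all_algebra.
From mathcomp Require Import finmap.
From mathcomp Require Import reals.
From mathcomp Require Import zify.
Set Implicit Arguments. Unset Strict Implicit. Unset Printing Implicit Defensive.
Import Order.TTheory GRing.Theory Num.Theory.
Local Open Scope ring_scope.
Local Open Scope fset_scope.

(* Let b be a point common to the Voronoi regions of all vertices of a simplex
   of Del+_{r,i}.  Each vertex of size m is then an initial segment of A ordered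
   by distance to b, and two initial segments of the same size can only differ
   on points at one common distance from b.  These points are cospherical, so by
   general position there are at most d+1 of them, and a vertex is determined by
   which of them it contains, a set of fixed size: at most C(d+1, (d+1)/2)
   vertices of each of the two sizes i and i+1. *)

Lemma leq_bin_succ n m : (m.+1 <= n - m)%N -> ('C(n, m) <= 'C(n, m.+1))%N.
Proof.
move=> le_m_nm; rewrite -(@leq_pmul2l m.+1) // mul_bin_left.
exact: leq_mul.
Qed.

Lemma leq_bin_half n m : ('C(n, m) <= 'C(n, n./2))%N.
Proof.
have n_half := odd_double_half n; rewrite -addnn in n_half.
wlog le_m_half : m / (m <= n./2)%N.
  move=> low; case: (leqP m n./2) => [/low//|lt_half_m].
  case: (leqP m n) => [le_mn|lt_nm]; last by rewrite bin_small.
  by rewrite -bin_sub //; apply: low; case: (odd n) n_half => /=; lia.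
have mono : {in [pred i | i <= n./2]%N &,
    {homo (fun i => 'C(n, i)) : i j / i <= j >-> i <= j}}%N.
  apply: homo_leq_in leqnn leq_trans _ _ => [i j _|i _]; rewrite !inE.
  - by move=> le_j_half k /andP[_ lt_kj]; rewrite inE; lia.
  - move=> lt_i_half; apply: leq_bin_succ.
    by case: (odd n) n_half => /=; lia.
by apply: mono; rewrite ?inE.
Qed.

Lemma card_fsubsets_le (T : choiceType) (S : {fset T}) (F : {fset {fset T}}) j :
  (forall B, B \in F -> B `<=` S /\ #|` B| = j) -> (#|` F| <= 'C(#|` S|, j))%N.
Proof.
move=> F_sub.
have inj : {in F &, injective (fsub S)}.
  by move=> B B' /F_sub[sB _] /F_sub[sB' _]; apply: fsub_inj.
have -> : #|` F| = #|` [fset fsub S B | B in F]| by rewrite card_in_imfset.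
rewrite [#|` S|]cardfE -card_draws -card_finset.
apply: fsubset_leq_card; apply/fsubsetP => _ /imfsetP[B /= /F_sub[sB cB] ->].
by rewrite inE /= inE card_fsub // cB.
Qed.

Lemma exists_fsubset_card (T : choiceType) (S : {fset T}) n :
  (n <= #|` S|)%N -> exists2 S', S' `<=` S & #|` S'| = n.
Proof.
move=> le_nS; exists [fset x in take n S].
  by apply/fsubsetP => x; rewrite inE => /mem_take.
rewrite card_fseq undup_id ?take_uniq ?fset_uniq // size_take.
by case: ltnP => // le_Sn; apply/eqP; rewrite eqn_leq le_Sn.
Qed.

Section InitialSegments.
Variables (T : choiceType) (disp : Order.disp_t) (R : porderType disp).

Definition initial_in (f : T -> R) (A B : {fset T}) : Prop :=
  forall p q, p \in B -> q \in A `\` B -> (f p <= f q)%O.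

Definition common_part (A : {fset T}) (F : {fset {fset T}}) : {fset T} :=
  [fset a in A | all (fun B : {fset T} => a \in B) F].

Definition varying_part (A : {fset T}) (F : {fset {fset T}}) : {fset T} :=
  [fset a in A | has (fun B : {fset T} => a \in B) F
              && has (fun B : {fset T} => a \notin B) F].

Variables (f : T -> R) (A : {fset T}) (F : {fset {fset T}}) (m : nat).
Hypothesis F_initial :
  forall B, B \in F -> [/\ B `<=` A, #|` B| = m & initial_in f A B].

Lemma initial_in_cross B B' p q :
  B \in F -> B' \in F -> p \in B -> q \in A `\` B' -> (f p <= f q)%O.
Proof.
move=> /F_initial[_ cB iB] /F_initial[B'A cB' iB'] pB qAB'.
have := qAB'; rewrite in_fsetD => /andP[qB' qA].
case qB: (q \in B); last by apply: iB; rewrite // in_fsetD qB.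
have [s sB' sB] : exists2 s, s \in B' & s \notin B.
  apply/fsubsetPn/negP => /(fsubset_cardP (etrans cB' (esym cB))) eqB'B.
  by rewrite eqB'B qB in qB'.
apply: (@le_trans _ _ (f s)); first by apply: iB; rewrite // in_fsetD sB (fsubsetP B'A).
exact: iB'.
Qed.

Lemma common_part_sub B : B \in F -> common_part A F `<=` B.
Proof. by move=> BF; apply/fsubsetP => a; rewrite inE => /andP[_ /allP]; apply. Qed.

Lemma varying_part_sub B : B \in F -> B `\` common_part A F `<=` varying_part A F.
Proof.
move=> BF; have [BA _ _] := F_initial BF.
apply/fsubsetP => a; rewrite !inE => /andP[a_common aB].
rewrite (fsubsetP BA) //=; apply/andP; split; first by apply/hasP; exists B.
by apply/hasP; move: a_common; rewrite (fsubsetP BA) //= => /allPn.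
Qed.

Lemma varying_part_level : {in varying_part A F &, forall p q, f p = f q}.
Proof.
have le_varying p q : p \in varying_part A F -> q \in varying_part A F -> (f p <= f q)%O.
  rewrite !inE => /andP[_ /andP[/hasP[B BF pB] _]] /andP[qA /andP[_ /hasP[B' B'F qB']]].
  by apply: (initial_in_cross BF B'F pB); rewrite in_fsetD qB'.
by move=> p q pV qV; apply: le_anti; rewrite !le_varying.
Qed.

Lemma card_initial_family_le :
  (#|` F| <= 'C(#|` varying_part A F|, m - #|` common_part A F|))%N.
Proof.
have inj : {in F &, injective (fun B => B `\` common_part A F)}.
  move=> B B' BF B'F /= eqD.
  rewrite -(fsetID (common_part A F) B) -(fsetID (common_part A F) B') eqD.
  by rewrite (fsetIidPr (common_part_sub BF)) (fsetIidPr (common_part_sub B'F)).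
have -> : #|` F| = #|` [fset B `\` common_part A F | B in F]|.
  by rewrite card_in_imfset.
apply: card_fsubsets_le => _ /imfsetP[B /= BF ->].
have [_ cB _] := F_initial BF.
by rewrite varying_part_sub // cardfsDS ?common_part_sub // cB.
Qed.

End InitialSegments.

Section Voronoi.
Variables (R : realType) (d : nat).
Implicit Types (A S : {fset 'rV[R]_d}) (b : 'rV[R]_d).

Lemma enorm_distrC (u v : 'rV[R]_d) : enorm (u - v) = enorm (v - u).
Proof.
by rewrite /enorm; congr Num.sqrt; apply: eq_bigr => j _; rewrite -opprB mxE sqrrN.
Qed.

Lemma equidistant_cospherical b S :
  {in S &, forall p q, enorm (b - p) = enorm (b - q)} -> cospherical S.
Proof.
case: (fset_0Vmem S) => [-> _|[p0 p0S] eqd]; first by exists b, 0.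
by exists b, (enorm (b - p0)) => p pS; rewrite enorm_distrC (eqd p p0).
Qed.

Lemma card_cospherical_le A S :
  general_position A -> S `<=` A -> cospherical S -> (#|` S| <= d.+1)%N.
Proof.
move=> [_ no_sphere] SA [c [rho Sc]]; rewrite leqNgt; apply/negP => lt_dS.
have [S' S'S cS'] := exists_fsubset_card lt_dS.
apply: (no_sphere S' (fsubset_trans S'S SA) cS').
by exists c, rho => p /(fsubsetP S'S); apply: Sc.
Qed.

Lemma card_voronoi_family_le A b (F : {fset {fset 'rV[R]_d}}) m :
  general_position A ->
  (forall B, B \in F -> [/\ B `<=` A, #|` B| = m & inVor A B b]) ->
  (#|` F| <= 'C(d.+1, (d.+1)./2))%N.
Proof.
move=> gpA F_vor.
(* [inVor A B b] unfolds to [initial_in (fun p => enorm (b - p)) A B]. *)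
apply: leq_trans (card_initial_family_le F_vor) _.
apply: leq_trans (leq_bin2l _ _) (leq_bin_half _ _).
apply: card_cospherical_le gpA (fset_sub _ _) _.
exact: equidistant_cospherical (varying_part_level F_vor).
Qed.

End Voronoi.

Theorem lemma14 (R : realType) (d : nat) (A : {fset 'rV[R]_d}) :
  general_position A ->
  forall (K : nat), (1 <= K)%N ->
  forall (r : R) (k : nat), 0 <= r -> (1 <= k)%N ->
  forall sigma : {fset {fset 'rV[R]_d}},
    SDel A K r k sigma ->
    (#|` sigma| - 1 <= 2 * 'C(d.+1, (d.+1)./2))%N.
Proof.
move=> gpA K _ r k _ _ sigma [i [_ [_ [sigma_vertex [b sigma_b]]]]].
have sigma_vor B : B \in sigma -> B `<=` A /\ inVor A B b.
  by move=> Bs; have [[BA _] [_ Bv]] := (sigma_vertex B Bs, sigma_b B Bs).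
set small := [fset B in sigma | #|` B| == i].
rewrite -(cardfsID small sigma).
suff [le_small le_large] : (#|` sigma `&` small| <= 'C(d.+1, (d.+1)./2))%N /\
                          (#|` sigma `\` small| <= 'C(d.+1, (d.+1)./2))%N by lia.
split.
- apply: (card_voronoi_family_le (b := b) (m := i)) gpA _ => B.
  rewrite !inE => /andP[Bs /andP[_ /eqP cB]].
  by have [BA Bv] := sigma_vor B Bs; split.
- apply: (card_voronoi_family_le (b := b) (m := i.+1)) gpA _ => B.
  rewrite in_fsetD => /andP[B_small Bs].
  have [BA Bv] := sigma_vor B Bs; split=> //.
  have [_ [cB|//]] := sigma_vertex B Bs.
  by move: B_small; rewrite !inE Bs cB eqxx.
Qed.
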